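(* Let $m\ge 1$ and let $P_{\mathcal F}$ be the set of nonzero polynomials of the form $f(z)=\sum_{k=0}^m c_k z^{\underline{k}}$ with all $c_k\in\mathbb R$, $c_k\ge0$. A complex number $w$ is a root of no polynomial in $P_{\mathcal F}$ if and only if $w\in S\cup\overline S$, where $$S=\Big\{z\in\mathbb C \ \Big|\ \mathrm{Arg}\,z\ge0\ \text{and}\ \sum_{i=1}^m\mathrm{Arg}(z-i+1)<\pi\Big\}$$ and $\overline S=\{\bar z\mid z\in S\}$.
   Context: $z^{\underline{k}}=z(z-1)\cdots(z-k+1)$, $z^{\underline 0}=1$. For nonzero $z$, $\mathrm{Arg}\,z$ is the principal argument, $-\pi<\mathrm{Arg}\,z\le\pi$; by convention $\mathrm{Arg}\,0=\infty$ (so any $z$ for which some $z-i+1=0$, $1\le i\le m$, is not in $S$). *)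

From Stdlib Require Import Reals.
Open Scope R_scope.

Definition Cplx : Type := (R * R)%type.
Definition Cre (z : Cplx) : R := fst z.
Definition Cim (z : Cplx) : R := snd z.
Definition Cadd (z w : Cplx) : Cplx := (Cre z + Cre w, Cim z + Cim w).
Definition Cmul (z w : Cplx) : Cplx :=
  (Cre z * Cre w - Cim z * Cim w, Cre z * Cim w + Cim z * Cre w).
Definition RtoC (r : R) : Cplx := (r, 0).
Definition Cconj (z : Cplx) : Cplx := (Cre z, - Cim z).
Definition C0 : Cplx := (0, 0).
Definition C1 : Cplx := (1, 0).

(* Principal argument of a NONZERO complex number, in (-PI, PI].
   (Value at 0 is irrelevant: the set S below explicitly excludes it,
   implementing the convention Arg 0 = infinity.) *)
Definition Arg (z : Cplx) : R :=
  let x := Cre z in let y := Cim z in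
  if Rlt_dec 0 x then atan (y / x)
  else if Rlt_dec x 0 then
         (if Rle_dec 0 y then atan (y / x) + PI else atan (y / x) - PI)
  else (if Rlt_dec 0 y then PI / 2 else - (PI / 2)).

Fixpoint ffact (z : Cplx) (k : nat) : Cplx :=
  match k with
  | O => C1
  | S k' => Cmul (ffact z k') (Cadd z (RtoC (- INR k')))
  end.

Fixpoint ffpoly (c : nat -> R) (m : nat) (z : Cplx) : Cplx :=
  match m with
  | O => Cmul (RtoC (c O)) (ffact z O)
  | S m' => Cadd (ffpoly c m' z) (Cmul (RtoC (c m)) (ffact z m))
  end.

Definition shift (z : Cplx) (i : nat) : Cplx := Cadd z (RtoC (1 - INR i)).

Fixpoint sumArg (z : Cplx) (m : nat) : R :=
  match m with
  | O => 0
  | S m' => sumArg z m' + Arg (shift z m)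
  end.

(* The set S: Arg z >= 0 and sum_{i=1}^m Arg(z-i+1) < PI, where each
   z-i+1 (1 <= i <= m) must be nonzero (Arg 0 = infinity convention). *)
Definition inS (m : nat) (z : Cplx) : Prop :=
  (forall i : nat, (1 <= i <= m)%nat -> shift z i <> C0) /\
  0 <= Arg z /\ sumArg z m < PI.

(* w is a root of some nonzero polynomial sum_{k<=m} c_k z^{underline k}
   with all c_k >= 0.  Nonzero polynomial <-> some c_k <> 0 since the
   falling factorials form a basis. *)
Definition root_of_PF (m : nat) (w : Cplx) : Prop :=
  exists c : nat -> R,
    (forall k, (k <= m)%nat -> 0 <= c k) /\
    (exists k, (k <= m)%nat /\ c k <> 0) /\
    ffpoly c m w = C0.

From Pilot Require Import Defs.
From Stdlib Require Import Reals Lra Lia.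
Open Scope R_scope.

(* For [w] in the closed upper half plane with [w - i + 1 <> 0], the falling
   factorial [w^(k)] has argument [sumArg w k], which increases with [k] by
   steps in [[0, PI]].  If [sumArg w m < PI], every [w^(k)], [k <= m], lies in
   the open half plane bisected by the direction [sumArg w m / 2], so no
   nontrivial nonnegative combination vanishes.  Otherwise, at the first [j]
   with [sumArg w (j+1) >= PI], the vectors [1], [w^(j)], [w^(j+1)] span a
   cone containing a line, giving a nonnegative vanishing combination.  A zero
   factor [w - i + 1] makes [w^(m)] itself vanish, and conjugation reduces the
   lower half plane to the upper one. *)

Ltac cplx :=
  unfold Cadd, Cmul, RtoC, Cconj, C0, Defs.C1, Cre, Cim in *; simpl in *.

Lemma atan_nonneg t : 0 <= t -> 0 <= atan t.
Proof.
  intro Ht; destruct (Req_dec t 0) as [->|]; [rewrite atan_0; lra|].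
  rewrite <- atan_0; left; apply atan_increasing; lra.
Qed.

Lemma atan_neg t : t < 0 -> atan t < 0.
Proof. intro Ht; rewrite <- atan_0; apply atan_increasing; lra. Qed.

Lemma Arg_le_PI z : Arg z <= PI.
Proof.
  destruct z as [x y]; unfold Arg, Cre, Cim; simpl.
  pose proof (atan_bound (y / x)); pose proof PI_RGT_0.
  destruct (Rlt_dec 0 x); [lra|].
  destruct (Rlt_dec x 0).
  - destruct (Rle_dec 0 y); [|lra].
    assert (atan (y / x) <= 0); [|lra].
    destruct (Req_dec y 0) as [->|]; [unfold Rdiv; rewrite Rmult_0_l, atan_0; lra|].
    left; apply atan_neg, Rdiv_pos_neg; lra.
  - destruct (Rlt_dec 0 y); lra.
Qed.

Lemma Cim_nonneg_of_Arg_nonneg z : 0 <= Arg z -> 0 <= Cim z.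
Proof.
  destruct z as [x y]; unfold Arg, Cre, Cim; simpl; intro H.
  pose proof (atan_bound (y / x)); pose proof PI_RGT_0.
  destruct (Rle_dec 0 y) as [|Hy]; [auto|exfalso].
  destruct (Rlt_dec 0 x) as [Hx|].
  - pose proof (atan_neg (y / x) (Rdiv_neg_pos y x ltac:(lra) Hx)); lra.
  - destruct (Rlt_dec x 0), (Rle_dec 0 y), (Rlt_dec 0 y); lra.
Qed.

Lemma Arg_nonneg_of_Cim_nonneg z : z <> C0 -> 0 <= Cim z -> 0 <= Arg z.
Proof.
  destruct z as [x y]; unfold Arg, Cre, Cim; simpl; intros Hz Hy.
  pose proof (atan_bound (y / x)); pose proof PI_RGT_0.
  destruct (Rlt_dec 0 x) as [Hx|Hx].
  - apply atan_nonneg; unfold Rdiv; apply Rmult_le_pos; [lra|].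
    left; apply Rinv_0_lt_compat; lra.
  - destruct (Rlt_dec x 0); [destruct (Rle_dec 0 y); lra|].
    assert (x = 0) by lra; subst x.
    destruct (Rlt_dec 0 y); [lra|].
    assert (y <> 0) by (intro; subst; apply Hz; reflexivity); lra.
Qed.

Lemma Arg_polar z : z <> C0 ->
  exists r, 0 < r /\ z = (r * cos (Arg z), r * sin (Arg z)).
Proof.
  destruct z as [x y]; intro Hz; unfold Arg, Cre, Cim; simpl.
  assert (Hs : 0 < sqrt (1 + (y / x)²))
    by (apply sqrt_lt_R0; pose proof (Rle_0_sqr (y / x)); lra).
  destruct (Rlt_dec 0 x) as [Hx|Hx].
  - exists (x * sqrt (1 + (y / x)²)); split; [nra|].
    rewrite cos_atan, sin_atan; f_equal; field; lra.
  - destruct (Rlt_dec x 0) as [Hx'|Hx'].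
    + exists (- x * sqrt (1 + (y / x)²)); split; [nra|].
      destruct (Rle_dec 0 y).
      * rewrite neg_cos, neg_sin, cos_atan, sin_atan; f_equal; field; lra.
      * rewrite cos_minus, sin_minus, cos_PI, sin_PI, cos_atan, sin_atan.
        f_equal; field; lra.
    + assert (x = 0) by lra; subst x.
      destruct (Rlt_dec 0 y).
      * exists y; split; [lra|]; rewrite cos_PI2, sin_PI2; f_equal; ring.
      * assert (y <> 0) by (intro; subst; apply Hz; reflexivity).
        exists (- y); split; [lra|].
        rewrite cos_neg, sin_neg, cos_PI2, sin_PI2; f_equal; ring.
Qed.

Lemma ffactS z k : ffact z (S k) = Cmul (ffact z k) (shift z (S k)).
Proof.
  unfold shift; cbn [ffact]; rewrite S_INR.
  replace (1 - (INR k + 1)) with (- INR k) by ring; reflexivity.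
Qed.

Lemma ffact_eq0 z i k : (1 <= i <= k)%nat -> shift z i = C0 -> ffact z k = C0.
Proof.
  intros Hi Hz; induction k as [|k IH]; [lia|].
  rewrite ffactS; destruct (Nat.eq_dec i (S k)) as [<-|].
  - rewrite Hz; cplx; f_equal; ring.
  - rewrite IH by lia; cplx; f_equal; ring.
Qed.

Lemma ffpoly_add c1 c2 m z :
  ffpoly (fun i => c1 i + c2 i) m z = Cadd (ffpoly c1 m z) (ffpoly c2 m z).
Proof.
  induction m as [|m IH]; cbn [ffpoly]; [|rewrite IH]; cplx; f_equal; ring.
Qed.

Definition single (j : nat) (a : R) (i : nat) : R := if Nat.eqb i j then a else 0.

Lemma ffpoly_single j a m z : (j <= m)%nat ->
  ffpoly (single j a) m z = Cmul (RtoC a) (ffact z j).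
Proof.
  enough (E : ffpoly (single j a) m z =
                if Nat.leb j m then Cmul (RtoC a) (ffact z j) else C0)
    by (intro; rewrite E, (proj2 (Nat.leb_le j m)); auto).
  unfold single; induction m as [|m IH]; cbn [ffpoly].
  - destruct (Nat.eqb_spec 0 j) as [<-|]; [reflexivity|].
    destruct (Nat.leb_spec j 0); [lia|]; cplx; f_equal; ring.
  - rewrite IH; destruct (Nat.eqb_spec (S m) j) as [<-|].
    + destruct (Nat.leb_spec (S m) m); [lia|].
      rewrite (proj2 (Nat.leb_le _ _)) by lia; cplx; f_equal; ring.
    + destruct (Nat.leb_spec j m), (Nat.leb_spec j (S m)); try lia; cplx; f_equal; ring.
Qed.

Lemma root_of_PF_of_ffact_eq0 m z : ffact z m = C0 -> root_of_PF m z.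
Proof.
  intro Hz; exists (single m 1); split; [|split].
  - intros k _; unfold single; destruct (Nat.eqb k m); lra.
  - exists m; split; [lia|]; unfold single; rewrite Nat.eqb_refl; lra.
  - rewrite ffpoly_single, Hz by lia; cplx; f_equal; ring.
Qed.

Lemma root_of_PF_of_combination m z j l mu nu :
  (S j <= m)%nat -> 0 <= l -> 0 <= mu -> 0 < nu ->
  Cadd (RtoC l) (Cadd (Cmul (RtoC mu) (ffact z j)) (Cmul (RtoC nu) (ffact z (S j))))
    = C0 ->
  root_of_PF m z.
Proof.
  intros Hj Hl Hmu Hnu Hz.
  exists (fun i => single 0 l i + (single j mu i + single (S j) nu i)); split; [|split].
  - intros k _; unfold single.
    destruct (Nat.eqb k 0), (Nat.eqb k j), (Nat.eqb k (S j)); lra.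
  - exists (S j); split; [lia|]; unfold single.
    rewrite Nat.eqb_refl, (proj2 (Nat.eqb_neq (S j) j)) by lia; simpl; lra.
  - rewrite ffpoly_add, (ffpoly_add (single j mu)), !ffpoly_single by lia.
    rewrite <- Hz; cbn [ffact]; cplx; f_equal; ring.
Qed.

Lemma ffact_conj z k : ffact (Cconj z) k = Cconj (ffact z k).
Proof. induction k as [|k IH]; cbn [ffact]; [|rewrite IH]; cplx; f_equal; ring. Qed.

Lemma ffpoly_conj c m z : ffpoly c m (Cconj z) = Cconj (ffpoly c m z).
Proof.
  induction m as [|m IH]; cbn [ffpoly]; rewrite ffact_conj; [|rewrite IH];
    cplx; f_equal; ring.
Qed.

Lemma root_of_PF_conj m z : root_of_PF m (Cconj z) <-> root_of_PF m z.
Proof.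
  enough (H : forall u, root_of_PF m u -> root_of_PF m (Cconj u)).
  { split; [|apply H]. intro Hc; apply H in Hc.
    replace (Cconj (Cconj z)) with z in Hc by (destruct z; cplx; f_equal; ring); exact Hc. }
  intros u [c [Hc [Hnz Hu]]]; exists c; repeat split; auto.
  rewrite ffpoly_conj, Hu; cplx; f_equal; ring.
Qed.

Lemma shift_conj z i : shift (Cconj z) i = Cconj (shift z i).
Proof. unfold shift; cplx; f_equal; ring. Qed.

Definition comp_along (p : R) (v : Cplx) : R := Cre v * cos p + Cim v * sin p.

Lemma comp_along_polar p r t : comp_along p (r * cos t, r * sin t) = r * cos (t - p).
Proof. unfold comp_along; cplx; rewrite cos_minus; ring. Qed.

Lemma comp_along_scale p a v : comp_along p (Cmul (RtoC a) v) = a * comp_along p v.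
Proof. unfold comp_along; cplx; ring. Qed.

Lemma comp_along_add p u v : comp_along p (Cadd u v) = comp_along p u + comp_along p v.
Proof. unfold comp_along; cplx; ring. Qed.

Lemma ffpoly_comp_along_ge c m z p :
  (forall k, (k <= m)%nat -> 0 <= c k) ->
  (forall k, (k <= m)%nat -> 0 <= comp_along p (ffact z k)) ->
  forall k, (k <= m)%nat -> c k * comp_along p (ffact z k) <= comp_along p (ffpoly c m z).
Proof.
  intros Hc Hf; induction m as [|m IH]; intros k Hk; cbn [ffpoly].
  - replace k with 0%nat by lia; rewrite comp_along_scale; lra.
  - rewrite comp_along_add, comp_along_scale.
    assert (Hlast : 0 <= c (S m) * comp_along p (ffact z (S m)))
      by (apply Rmult_le_pos; auto).
    assert (IH' : forall k, (k <= m)%nat ->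
                   c k * comp_along p (ffact z k) <= comp_along p (ffpoly c m z))
      by (apply IH; intros; [apply Hc | apply Hf]; lia).
    destruct (Nat.eq_dec k (S m)) as [->|Hne]; [|pose proof (IH' k ltac:(lia)); lra].
    assert (0 <= c 0%nat * comp_along p (ffact z 0)) by (apply Rmult_le_pos; auto with arith).
    pose proof (IH' 0%nat ltac:(lia)); lra.
Qed.

(* The coefficients are nonnegative when [0 < a < PI <= b <= a + PI]. *)
Lemma sin_combination_eq0 a b r1 r2 : r1 <> 0 -> r2 <> 0 ->
  Cadd (RtoC (sin (b - a)))
       (Cadd (Cmul (RtoC (- sin b / r1)) (r1 * cos a, r1 * sin a))
             (Cmul (RtoC (sin a / r2)) (r2 * cos b, r2 * sin b))) = C0.
Proof. intros; rewrite sin_minus; cplx; f_equal; field; auto. Qed.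

Lemma first_crossing (f : nat -> R) (t : R) m : f 0%nat < t -> t <= f m ->
  exists k, (k < m)%nat /\ f k < t /\ t <= f (S k).
Proof.
  intro H0; induction m as [|m IH]; intro Hm; [lra|].
  destruct (Rle_dec t (f m)) as [Hl|Hl].
  - destruct (IH Hl) as [k [? ?]]; exists k; split; [lia|auto].
  - exists m; repeat split; [lia|lra|auto].
Qed.

Section UpperHalfPlane.

Variables (w : Cplx) (m : nat).
Hypothesis Im_w_nonneg : 0 <= Cim w.
Hypothesis shift_neq0 : forall i, (1 <= i <= m)%nat -> shift w i <> C0.

Lemma ffact_polar k : (k <= m)%nat ->
  exists r, 0 < r /\ ffact w k = (r * cos (sumArg w k), r * sin (sumArg w k)).
Proof.
  induction k as [|k IH]; intro Hk.
  - exists 1; split; [lra|]; cbn [ffact sumArg]; rewrite cos_0, sin_0; cplx; f_equal; ring.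
  - destruct (IH ltac:(lia)) as [r [Hr E]].
    destruct (Arg_polar (shift w (S k))) as [s [Hs Es]]; [apply shift_neq0; lia|].
    exists (r * s); split; [nra|].
    rewrite ffactS, E, Es; cbn [sumArg]; rewrite cos_plus, sin_plus; cplx; f_equal; ring.
Qed.

Lemma Arg_shift_nonneg i : (1 <= i <= m)%nat -> 0 <= Arg (shift w i).
Proof.
  intro Hi; apply Arg_nonneg_of_Cim_nonneg; [apply shift_neq0; auto|].
  unfold shift; cplx; lra.
Qed.

Lemma sumArg_mono k n : (k <= n <= m)%nat -> 0 <= sumArg w k <= sumArg w n.
Proof.
  revert k; induction n as [|n IH]; intros k Hkn.
  - replace k with 0%nat by lia; cbn [sumArg]; lra.
  - pose proof (Arg_shift_nonneg (S n) ltac:(lia)); cbn [sumArg].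
    destruct (Nat.eq_dec k (S n)) as [->|]; [cbn [sumArg]|];
      [pose proof (IH n ltac:(lia)) | pose proof (IH k ltac:(lia))]; lra.
Qed.

Lemma not_root_of_sumArg_lt_PI : sumArg w m < PI -> ~ root_of_PF m w.
Proof.
  intros Hlt [c [Hc [[k [Hk Hck]] Hroot]]].
  set (p := sumArg w m / 2).
  assert (Hpos : forall i, (i <= m)%nat -> 0 < comp_along p (ffact w i)).
  { intros i Hi; destruct (ffact_polar i Hi) as [r [Hr ->]].
    rewrite comp_along_polar; apply Rmult_lt_0_compat; [lra|].
    pose proof (sumArg_mono i m ltac:(lia)); apply cos_gt_0; unfold p; lra. }
  pose proof (ffpoly_comp_along_ge c m w p Hc (fun i Hi => Rlt_le _ _ (Hpos i Hi)) k Hk)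
    as Hge.
  replace (comp_along p (ffpoly c m w)) with 0 in Hge
    by (rewrite Hroot; unfold comp_along; cplx; ring).
  pose proof (Hpos k Hk); pose proof (Hc k Hk).
  assert (0 < c k) by lra; nra.
Qed.

Lemma root_of_sumArg_ge_PI : PI <= sumArg w m -> root_of_PF m w.
Proof.
  intro Hge; pose proof PI_RGT_0.
  destruct (first_crossing (sumArg w) PI m) as [j [Hj [Ha Hb]]];
    [cbn [sumArg]; lra | exact Hge |].
  pose proof (sumArg_mono j j ltac:(lia)) as Ha0.
  assert (Hstep : sumArg w (S j) <= sumArg w j + PI)
    by (cbn [sumArg]; pose proof (Arg_le_PI (shift w (S j))); lra).
  destruct (ffact_polar j ltac:(lia)) as [r1 [Hr1 E1]].
  destruct (ffact_polar (S j) ltac:(lia)) as [r2 [Hr2 E2]].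
  set (a := sumArg w j) in *; set (b := sumArg w (S j)) in *.
  destruct (Req_dec a 0) as [Ha00|Hapos].
  - apply (root_of_PF_of_combination m w j 1 0 (1 / r2)); [lia|lra|lra| |].
    + apply Rdiv_lt_0_compat; lra.
    + rewrite E2; replace b with PI by lra; rewrite cos_PI, sin_PI.
      cplx; f_equal; field; lra.
  - apply (root_of_PF_of_combination m w j (sin (b - a)) (- sin b / r1) (sin a / r2));
      [lia| | | |].
    + apply sin_ge_0; lra.
    + pose proof (sin_le_0 b ltac:(lra) ltac:(lra)).
      unfold Rdiv; apply Rmult_le_pos; [lra|left; apply Rinv_0_lt_compat; lra].
    + apply Rdiv_lt_0_compat; [apply sin_gt_0|]; lra.
    + rewrite E1, E2; apply sin_combination_eq0; lra.
Qed.

End UpperHalfPlane.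

Lemma not_root_iff_inS_upper m w : (1 <= m)%nat -> 0 <= Cim w ->
  (~ root_of_PF m w <-> inS m w).
Proof.
  intros hm Hw; split.
  - intro Hn.
    assert (Hs : forall i, (1 <= i <= m)%nat -> shift w i <> C0)
      by (intros i Hi Hz; apply Hn, root_of_PF_of_ffact_eq0, (ffact_eq0 w i m Hi Hz)).
    split; [exact Hs|split].
    + apply Arg_nonneg_of_Cim_nonneg; [|exact Hw].
      intro Hz; apply (Hs 1%nat); [lia|]; subst w; unfold shift; cplx; f_equal; ring.
    + destruct (Rlt_dec (sumArg w m) PI) as [|Hge]; [auto|].
      exfalso; apply Hn, root_of_sumArg_ge_PI; auto; lra.
  - intros [Hs [_ Hlt]]; apply not_root_of_sumArg_lt_PI; auto.
Qed.

Theorem theorem4p17 (m : nat) (hm : (1 <= m)%nat) (w : Cplx) :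
  ~ root_of_PF m w <-> (inS m w \/ inS m (Cconj w)).
Proof.
  assert (Hupper : forall z, 0 <= Cim z -> (~ root_of_PF m z <-> inS m z))
    by (intros; apply not_root_iff_inS_upper; auto).
  split.
  - intro Hn; destruct (Rle_dec 0 (Cim w)) as [Hw|Hw].
    + left; apply Hupper; auto.
    + right; apply Hupper; [cplx; lra|]; rewrite root_of_PF_conj; exact Hn.
  - intros [HS|HS]; [|rewrite <- (root_of_PF_conj m w)]; apply Hupper; auto;
      exact (Cim_nonneg_of_Arg_nonneg _ (proj1 (proj2 HS))).
Qed.
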